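(* For all $\Gamma,\Delta\subseteq\mathcal{L}_{\Box\!\!\rightarrow}$: $(\Gamma,\Delta)\in\mathsf{N4CK}$ iff $(E^\pm(\Gamma),E^\pm(\Delta))\in\mathsf{IntCK}^{e+}$. That is, $E^\pm$ faithfully embeds $\mathsf{N4CK}$ into the extended positive intuitionistic conditional logic $\mathsf{IntCK}^{e+}$.
   Context: $\mathcal{L}_{\Box\!\!\rightarrow}$ is built from variables $p_0,p_1,\dots$ with $\wedge,\vee,\to$, strong negation $\sim$, and a binary would-conditional $\Box\!\!\rightarrow$. A Nelsonian conditional model is $(W,\leq,R,V^+,V^-)$ with $W\neq\emptyset$, $\leq$ a preorder, $V^\pm$ assigning upward-closed sets, $R\subseteq W\times(\mathcal{P}(W)\times\mathcal{P}(W))\times W$ satisfying for all $X,Y$: (c1) $w\leq w'$ and $R_{(X,Y)}(w,v)$ imply $R_{(X,Y)}(w',v')$ for some $v'\geq v$; (c2) $R_{(X,Y)}(w,v)$ and $v\leq v'$ imply $R_{(X,Y)}(w',v')$ for some $w'\geq w$. Verification $\models^+$/falsification $\models^-$: atoms by $V^\pm$; $\wedge$ verified iff both verified, falsified iff one falsified; $\vee$ dually; $\sim$ swaps; $w\models^+\psi\to\chi$ iff for all $v\geq w$, $v\models^+\psi$ implies $v\models^+\chi$; $w\models^-\psi\to\chi$ iff $w\models^+\psi$ and $w\models^-\chi$; $w\models^+\psi\Box\!\!\rightarrow\chi$ iff for all $v\geq w$ and $u$ with $R_{\|\psi\|}(v,u)$, $u\models^+\chi$; $w\models^-\psi\Box\!\!\rightarrow\chi$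 iff some $u$ has $R_{\|\psi\|}(w,u)$ and $u\models^-\chi$; $\|\psi\|=(\{w\mid w\models^+\psi\},\{w\mid w\models^-\psi\})$. $(\Gamma,\Delta)\in\mathsf{N4CK}$ iff no pointed such model verifies all of $\Gamma$ and none of $\Delta$. $\mathsf{IntCK}^{e+}$ is over the language with variables $p_i,q_i$, connectives $\wedge,\vee,\to$, primitive $\Box\!\!\rightarrow,\Diamond\!\!\rightarrow$ (no negation); its models are $(W,\leq,R,V)$ with $\leq$ a preorder, $V$ assigning upward-closed sets, $R\subseteq W\times\mathcal{P}(W)\times W$ such that for all $X$: if $w\leq w'$ and $R_X(w,v)$ then $R_X(w',v')$ for some $v'\geq v$; if $R_X(w,v)$ and $v\leq v'$ then $R_X(w',v')$ for some $w'\geq w$; satisfaction $\models^i$: intuitionistic for $\wedge,\vee,\to$; $w\models^i\psi\Box\!\!\rightarrow\chi$ iff for all $v\geq w$ and $u$ with $R_{\|\psi\|^i}(v,u)$, $u\models^i\chi$; $w\models^i\psi\Diamond\!\!\rightarrow\chi$ iff some $u$ has $R_{\|\psi\|^i}(w,u)$ and $u\models^i\chi$, where $\|\psi\|^i$ is the truth set; $(\Gamma,\Delta)\in\mathsf{IntCK}^{e+}$ iff no pointed model satisfies all of $\Gamma$ and none of $\Delta$. The translation $E^\pm$: $E^\pm(p_i)=p_i$, $E^\pm(\sim p_i)=q_i$, $E^\pm(\phi\wedge\psi)=E^\pm(\phi)\wedge E^\pm(\psi)$, $E^\pm(\sim(\phi\wedge\psi))=E^\pm(\sim\phi)\vee E^\pm(\sim\psi)$,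 $E^\pm(\phi\vee\psi)=E^\pm(\phi)\vee E^\pm(\psi)$, $E^\pm(\sim(\phi\vee\psi))=E^\pm(\sim\phi)\wedge E^\pm(\sim\psi)$, $E^\pm(\sim\sim\phi)=E^\pm(\phi)$, $E^\pm(\phi\to\psi)=E^\pm(\phi)\to E^\pm(\psi)$, $E^\pm(\sim(\phi\to\psi))=E^\pm(\phi)\wedge E^\pm(\sim\psi)$, $E^\pm(\phi\Box\!\!\rightarrow\psi)=E^\pm(\phi)\Box\!\!\rightarrow(E^\pm(\sim\phi)\Box\!\!\rightarrow E^\pm(\psi))$, $E^\pm(\sim(\phi\Box\!\!\rightarrow\psi))=E^\pm(\phi)\Diamond\!\!\rightarrow(E^\pm(\sim\phi)\Diamond\!\!\rightarrow E^\pm(\sim\psi))$. *)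

(** Source language L_{□→}: variables p_i, ∧, ∨, →, strong negation ∼, would-conditional □→. *)
Inductive form : Type :=
| Var  : nat -> form
| And  : form -> form -> form
| Or   : form -> form -> form
| Imp  : form -> form -> form
| SNeg : form -> form
| Box  : form -> form -> form.

(** Target language of IntCK^{e+}: variables p_i, q_i; ∧, ∨, →; primitive □→ and ◇→. *)
Inductive iform : Type :=
| IP   : nat -> iform
| IQ   : nat -> iform
| IAnd : iform -> iform -> iform
| IOr  : iform -> iform -> iform
| IImp : iform -> iform -> iform
| IBox : iform -> iform -> iform
| IDia : iform -> iform -> iform.

Record NModel : Type := {
  nW : Type;
  nle : nW -> nW -> Prop;
  nle_refl : forall w, nle w w;
  nle_trans : forall u v w, nle u v -> nle v w -> nle u w;
  nR : (nW -> Prop) -> (nW -> Prop) -> nW -> nW -> Prop;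
  nVp : nat -> nW -> Prop;
  nVm : nat -> nW -> Prop;
  nVp_up : forall i w w', nle w w' -> nVp i w -> nVp i w';
  nVm_up : forall i w w', nle w w' -> nVm i w -> nVm i w';
  nc1 : forall X Y w w' v, nle w w' -> nR X Y w v ->
          exists v', nle v v' /\ nR X Y w' v';
  nc2 : forall X Y w v v', nR X Y w v -> nle v v' ->
          exists w', nle w w' /\ nR X Y w' v'
}.

(** Verification (b = true) and falsification (b = false). *)
Fixpoint nsat (M : NModel) (b : bool) (phi : form) (w : nW M) {struct phi} : Prop :=
  match phi with
  | Var i => if b then nVp M i w else nVm M i w
  | And a c => if b then nsat M true a w /\ nsat M true c w
               else nsat M false a w \/ nsat M false c w
  | Or a c => if b then nsat M true a w \/ nsat M true c w
              else nsat M false a w /\ nsat M false c w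
  | Imp a c => if b then (forall v, nle M w v -> nsat M true a v -> nsat M true c v)
               else nsat M true a w /\ nsat M false c w
  | SNeg a => nsat M (negb b) a w
  | Box a c => if b then
                 (forall v u, nle M w v ->
                    nR M (nsat M true a) (nsat M false a) v u -> nsat M true c u)
               else
                 (exists u, nR M (nsat M true a) (nsat M false a) w u /\ nsat M false c u)
  end.

Definition N4CK (Gamma Delta : form -> Prop) : Prop :=
  ~ exists (M : NModel) (w : nW M),
      (forall g, Gamma g -> nsat M true g w) /\
      (forall d, Delta d -> ~ nsat M true d w).

Record IModel : Type := {
  iW : Type;
  ile : iW -> iW -> Prop;
  ile_refl : forall w, ile w w;
  ile_trans : forall u v w, ile u v -> ile v w -> ile u w;
  iR : (iW -> Prop) -> iW -> iW -> Prop;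
  iVal : bool -> nat -> iW -> Prop; (* true: p_i, false: q_i *)
  iVal_up : forall b i w w', ile w w' -> iVal b i w -> iVal b i w';
  ic1 : forall X w w' v, ile w w' -> iR X w v -> exists v', ile v v' /\ iR X w' v';
  ic2 : forall X w v v', iR X w v -> ile v v' -> exists w', ile w w' /\ iR X w' v'
}.

Fixpoint isat (M : IModel) (phi : iform) (w : iW M) {struct phi} : Prop :=
  match phi with
  | IP i => iVal M true i w
  | IQ i => iVal M false i w
  | IAnd a c => isat M a w /\ isat M c w
  | IOr a c => isat M a w \/ isat M c w
  | IImp a c => forall v, ile M w v -> isat M a v -> isat M c v
  | IBox a c => forall v u, ile M w v -> iR M (isat M a) v u -> isat M c u
  | IDia a c => exists u, iR M (isat M a) w u /\ isat M c u
  end.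

Definition IntCKe (Gamma Delta : iform -> Prop) : Prop :=
  ~ exists (M : IModel) (w : iW M),
      (forall g, Gamma g -> isat M g w) /\
      (forall d, Delta d -> ~ isat M d w).

(** Translation: Etr true φ = E^±(φ), Etr false φ = E^±(∼φ). *)
Fixpoint Etr (b : bool) (phi : form) {struct phi} : iform :=
  match phi with
  | Var i => if b then IP i else IQ i
  | And a c => if b then IAnd (Etr true a) (Etr true c)
               else IOr (Etr false a) (Etr false c)
  | Or a c => if b then IOr (Etr true a) (Etr true c)
              else IAnd (Etr false a) (Etr false c)
  | Imp a c => if b then IImp (Etr true a) (Etr true c)
               else IAnd (Etr true a) (Etr false c)
  | SNeg a => Etr (negb b) a
  | Box a c => if b then IBox (Etr true a) (IBox (Etr false a) (Etr true c))
               else IDia (Etr true a) (IDia (Etr false a) (Etr false c))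
  end.

Definition Epm (phi : form) : iform := Etr true phi.

Definition Eimg (Gamma : form -> Prop) : iform -> Prop :=
  fun chi => exists phi, Gamma phi /\ chi = Epm phi.

From Stdlib Require Import FunctionalExtensionality PropExtensionality.

(* Both directions are model constructions, each with a truth lemma saying
   that [phi] is verified (falsified) at [w] iff [E^±(phi)] ([E^±(~phi)])
   holds at [w].  An IntCK^{e+} model becomes a Nelsonian one by reading
   [R_(X,Y)] as the composite [R_X ; R_Y]; then the nested [□→]/[◇→] of the
   translation of a conditional say exactly what verification/falsification
   of the conditional says.  Conversely, a Nelsonian model is made into an
   IntCK^{e+} one by adding intermediate worlds [(w, X)] that remember the
   verified set [X] of an antecedent: [R_X] steps from [w] to [(w, X)], and
   [R_Y] steps from [(w, X)] to the [R_(X,Y)]-successors of [w]. *)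

Lemma pred_ext {T : Type} (P Q : T -> Prop) : (forall x, P x <-> Q x) -> P = Q.
Proof.
  intro H; apply functional_extensionality; intro x.
  apply propositional_extensionality, H.
Qed.

Section NModelOfIModel.
Variable M : IModel.

Definition rel_comp (X Y : iW M -> Prop) (w v : iW M) : Prop :=
  exists u, iR M X w u /\ iR M Y u v.

Lemma rel_comp_c1 X Y w w' v :
  ile M w w' -> rel_comp X Y w v -> exists v', ile M v v' /\ rel_comp X Y w' v'.
Proof.
  intros Hw [u [HX HY]].
  destruct (ic1 M X w w' u Hw HX) as [u' [Hu HX']].
  destruct (ic1 M Y u u' v Hu HY) as [v' [Hv HY']].
  exists v'; split; [exact Hv | exists u'; auto].
Qed.

Lemma rel_comp_c2 X Y w v v' :
  rel_comp X Y w v -> ile M v v' -> exists w', ile M w w' /\ rel_comp X Y w' v'.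
Proof.
  intros [u [HX HY]] Hv.
  destruct (ic2 M Y u v v' HY Hv) as [u' [Hu HY']].
  destruct (ic2 M X w u u' HX Hu) as [w' [Hw HX']].
  exists w'; split; [exact Hw | exists u'; auto].
Qed.

Lemma isat_box_box a b c w :
  isat M (IBox a (IBox b c)) w <->
  forall v u, ile M w v -> rel_comp (isat M a) (isat M b) v u -> isat M c u.
Proof.
  simpl; split.
  - intros H v u Hv [m [Ha Hb]]. exact (H v m Hv Ha m u (ile_refl M m) Hb).
  - intros H v m Hv Ha m' u Hm Hb.
    (* (c2) moves the [R_a]-step up to [m'], so [w <= v' R_a m' R_b u]. *)
    destruct (ic2 M _ v m m' Ha Hm) as [v' [Hvv' Ha']].
    apply (H v' u); [eapply ile_trans; eauto | exists m'; auto].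
Qed.

Lemma isat_dia_dia a b c w :
  isat M (IDia a (IDia b c)) w <->
  exists u, rel_comp (isat M a) (isat M b) w u /\ isat M c u.
Proof.
  simpl; split.
  - intros [m [Ha [u [Hb Hc]]]]. exists u; split; [exists m|]; auto.
  - intros [u [[m [Ha Hb]] Hc]]. exists m; split; [|exists u]; auto.
Qed.

Definition nmodel_of_imodel : NModel := {|
  nW := iW M; nle := ile M; nle_refl := ile_refl M; nle_trans := ile_trans M;
  nR := rel_comp; nVp := iVal M true; nVm := iVal M false;
  nVp_up := iVal_up M true; nVm_up := iVal_up M false;
  nc1 := rel_comp_c1; nc2 := rel_comp_c2 |}.

Lemma nsat_nmodel_of_imodel phi b :
  nsat nmodel_of_imodel b phi = isat M (Etr b phi).
Proof.
  revert b.
  induction phi as [i|a IHa c IHc|a IHa c IHc|a IHa c IHc|a IHa|a IHa c IHc];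
    intros [|]; apply pred_ext; intro w;
    cbn [nsat Etr negb nR nle nVp nVm nmodel_of_imodel];
    rewrite ?IHa, ?IHc; try solve [simpl; tauto].
  - rewrite isat_box_box. reflexivity.
  - rewrite isat_dia_dia. reflexivity.
Qed.

End NModelOfIModel.

Section IModelOfNModel.
Variable M : NModel.

Definition ext_world : Type := (nW M + nW M * (nW M -> Prop))%type.

Definition restrict (X : ext_world -> Prop) : nW M -> Prop :=
  fun z => X (inl z).

Definition ext_le (x y : ext_world) : Prop :=
  match x, y with
  | inl a, inl b => nle M a b
  | inr (a, X), inr (b, Y) => nle M a b /\ X = Y
  | _, _ => False
  end.

Definition ext_R (X : ext_world -> Prop) (x y : ext_world) : Prop :=
  match x, y with
  | inl a, inr (b, Y) => a = b /\ Y = restrict X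
  | inr (a, Y), inl b => nR M Y (restrict X) a b
  | _, _ => False
  end.

Definition ext_val (b : bool) (i : nat) (x : ext_world) : Prop :=
  match x with
  | inl a => if b then nVp M i a else nVm M i a
  | inr _ => False
  end.

Lemma ext_le_refl w : ext_le w w.
Proof. destruct w as [a|[a X]]; simpl; auto using nle_refl. Qed.

Lemma ext_le_trans u v w : ext_le u v -> ext_le v w -> ext_le u w.
Proof.
  destruct u as [a|[a X]], v as [b|[b Y]], w as [c|[c Z]]; simpl; try tauto.
  - apply nle_trans.
  - intros [Hab ->] [Hbc ->]; split; [eapply nle_trans; eauto | reflexivity].
Qed.

Lemma ext_val_up b i w w' : ext_le w w' -> ext_val b i w -> ext_val b i w'.
Proof.
  destruct w as [a|], w' as [c|]; simpl; try tauto.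
  destruct b; [apply nVp_up | apply nVm_up].
Qed.

Lemma ext_R_c1 X w w' v :
  ext_le w w' -> ext_R X w v -> exists v', ext_le v v' /\ ext_R X w' v'.
Proof.
  destruct w as [a|[a Y]], w' as [a'|[a' Y']], v as [b|[b Z]]; simpl; try tauto.
  - intros Ha [<- ->]. exists (inr (a', restrict X)); simpl; auto.
  - intros [Ha <-] HR.
    destruct (nc1 M _ _ a a' b Ha HR) as [b' [Hb HR']].
    exists (inl b'); simpl; auto.
Qed.

Lemma ext_R_c2 X w v v' :
  ext_R X w v -> ext_le v v' -> exists w', ext_le w w' /\ ext_R X w' v'.
Proof.
  destruct w as [a|[a Y]], v as [b|[b Z]], v' as [b'|[b' Z']]; simpl; try tauto.
  - intros [<- ->] [Hb <-]. exists (inl b'); simpl; auto.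
  - intros HR Hb.
    destruct (nc2 M _ _ a b b' HR Hb) as [a' [Ha HR']].
    exists (inr (a', Y)); simpl; auto.
Qed.

Definition imodel_of_nmodel : IModel := {|
  iW := ext_world; ile := ext_le;
  ile_refl := ext_le_refl; ile_trans := ext_le_trans;
  iR := ext_R; iVal := ext_val; iVal_up := ext_val_up;
  ic1 := ext_R_c1; ic2 := ext_R_c2 |}.

Local Notation N := imodel_of_nmodel.

Lemma isat_imp_inl a c w :
  isat N (IImp a c) (inl w) <->
  forall v, nle M w v -> isat N a (inl v) -> isat N c (inl v).
Proof.
  simpl; split.
  - intros H v. exact (H (inl v)).
  - intros H [v|] Hv; [exact (H v Hv) | destruct Hv].
Qed.

Lemma isat_box_box_inl a b c w :
  isat N (IBox a (IBox b c)) (inl w) <->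
  forall v u, nle M w v ->
    nR M (restrict (isat N a)) (restrict (isat N b)) v u -> isat N c (inl u).
Proof.
  simpl; split.
  - intros H v u Hv HR.
    set (m := inr (v, restrict (isat N a)) : ext_world).
    exact (H (inl v) m Hv (conj eq_refl eq_refl) m (inl u) (ext_le_refl m) HR).
  - intros H [v|] [u|[u X]] Hv; simpl in *; try tauto.
    intros [<- ->] [|[v' X']] [u'|] Hvv'; simpl in *; try tauto.
    destruct Hvv' as [Hvv' <-]. apply H. eapply nle_trans; eauto.
Qed.

Lemma isat_dia_dia_inl a b c w :
  isat N (IDia a (IDia b c)) (inl w) <->
  exists u, nR M (restrict (isat N a)) (restrict (isat N b)) w u /\
    isat N c (inl u).
Proof.
  simpl; split.
  - intros [[|[m X]] [HR [[u|] [HR' Hc]]]]; simpl in HR, HR'; try tauto.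
    destruct HR as [<- ->]. exists u; auto.
  - intros [u [HR Hc]].
    exists (inr (w, restrict (isat N a))); simpl; split; auto.
    exists (inl u); auto.
Qed.

Lemma isat_imodel_of_nmodel phi b w :
  isat N (Etr b phi) (inl w) <-> nsat M b phi w.
Proof.
  revert b w.
  induction phi as [i|a IHa c IHc|a IHa c IHc|a IHa c IHc|a IHa|a IHa c IHc];
    intros [|] w; cbn [Etr nsat negb];
    try solve [simpl; rewrite ?IHa, ?IHc; tauto].
  1: rewrite isat_imp_inl; setoid_rewrite IHa; setoid_rewrite IHc; reflexivity.
  all: assert (Hrestrict : forall b, restrict (isat N (Etr b a)) = nsat M b a)
         by (intro; apply pred_ext; intro; apply IHa).
  - rewrite isat_box_box_inl, !Hrestrict. setoid_rewrite IHc. reflexivity.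
  - rewrite isat_dia_dia_inl, !Hrestrict. setoid_rewrite IHc. reflexivity.
Qed.

End IModelOfNModel.

Theorem proposition9 (Gamma Delta : form -> Prop) :
  N4CK Gamma Delta <-> IntCKe (Eimg Gamma) (Eimg Delta).
Proof.
  split.
  - intros HN [M [w [HG HD]]]. apply HN.
    exists (nmodel_of_imodel M), w; split.
    + intros g Hg. rewrite nsat_nmodel_of_imodel. apply HG. now exists g.
    + intros d Hd. rewrite nsat_nmodel_of_imodel. apply HD. now exists d.
  - intros HI [M [w [HG HD]]]. apply HI.
    exists (imodel_of_nmodel M), (inl w); split.
    + intros _ [g [Hg ->]]. apply isat_imodel_of_nmodel, HG, Hg.
    + intros _ [d [Hd ->]] Hs. apply (HD d Hd), isat_imodel_of_nmodel, Hs.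
Qed.
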